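(* The complement of $\mathcal S_1\cup\mathcal S_2$ in the invariant torsion variety $\mathcal M\cong\mathbb{RP}^1\times\mathbb{RP}^2$ contains exactly two components $\mathcal M_\pm$. The isomorphism classes of the Lie algebras $\mathfrak g_{\mathbf x,\mathbf y}$ corresponding to points of $\mathcal M$ are as follows: (1) points of $\mathcal M_+$ correspond to the semi-simple Lie algebra $\mathfrak{so}(3)\oplus\mathfrak{so}(3)$; (2) points of $\mathcal M_-$ correspond to the semi-simple Lie algebra $\mathfrak{so}(3,\mathbb C)$; (3) points of $\mathcal S_1\setminus \mathcal C$ correspond to the semi-direct product $\mathfrak{so}(3)\ltimes\mathbb R^3$; (4) points of $\mathcal S_2\setminus \mathcal C$ correspond to the direct sum $\mathfrak{so}(3)\oplus\mathbb R^3$; (5) points of $\mathcal C = \mathcal S_1\cap \mathcal S_2$ correspond to the nilpotent Lie algebra $(0,0,0,12,13,23)$ (i.e. with a basis satisfying $df^1=df^2=df^3=0$, $df^4=f^{12}$, $df^5=f^{13}$, $df^6=f^{23}$).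
   Context: Represent a point of $\mathcal M\cong\mathbb{RP}^1\times\mathbb{RP}^2$ by a pair of nonzero polynomials $\mathbf x=x_1u_1+x_2u_2$, $\mathbf y=y_1u_1^2+y_2u_1u_2+y_3u_2^2$ (up to independent scaling). To it corresponds the Lie algebra $\mathfrak g_{\mathbf x,\mathbf y}$ with a basis $e^1,\dots,e^6$ of its dual satisfying ($e^{ij}=e^i\wedge e^j$): $de^1=(x_2y_1-x_1y_2)e^{35}-x_1y_3(e^{36}+e^{45})-x_2y_3e^{46}$, $de^3=-(x_2y_1-x_1y_2)e^{15}+x_1y_3(e^{16}+e^{25})+x_2y_3e^{26}$, $de^5=(x_2y_1-x_1y_2)e^{13}-x_1y_3(e^{14}+e^{23})-x_2y_3e^{24}$, $de^2=x_1y_1e^{35}-(x_1y_3-y_2x_2)e^{46}+x_2y_1(e^{36}+e^{45})$, $de^4=-x_1y_1e^{15}+(x_1y_3-y_2x_2)e^{26}-x_2y_1(e^{16}+e^{25})$, $de^6=x_1y_1e^{13}-(x_1y_3-y_2x_2)e^{24}+x_2y_1(e^{14}+e^{23})$ (these are exactly the left-invariant $SO(3)$-structures with invariant intrinsic torsion whose flat connection has invariant torsion, up to scale). Let $\Delta(\mathbf y)=y_2^2-4y_1y_3$ and $R(\mathbf x,\mathbf y)=x_2^2y_1+y_3x_1^2-y_2x_2x_1$ (discriminant and resultant). Define the subvarieties $\mathcal M_+=\{\Delta>0,R\neq0\}$, $\mathcal M_-=\{\Delta<0,R\neq0\}$, $\mathcal S_1=\{\Delta=0\}$, $\mathcal S_2=\{R=0\}$,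 $\mathcal C=\mathcal S_1\cap\mathcal S_2$ (the locus where $\mathbf y$ is a multiple of $\mathbf x^2$). *)

From HB Require Import structures.
From mathcomp Require Import all_boot all_order all_algebra.
From mathcomp Require Import all_classical all_reals topology normedtype.
Set Implicit Arguments. Unset Strict Implicit. Unset Printing Implicit Defensive.
Import Order.TTheory GRing.Theory Num.Theory.
Import numFieldNormedType.Exports.
Local Open Scope ring_scope.

(* A 6-dimensional real Lie algebra is given through the exterior differential
   of a dual basis e^1..e^6 (indices 0..5 here):
     D k i j = coefficient of e^{ij} (i < j) in d e^k.
   With the convention d e^k (X,Y) = - e^k([X,Y]), the structure constants are
   [e_i, e_j] = sum_k sc D i j k e_k below. *)
Definition dform (R : realType) := 'I_6 -> 'I_6 -> 'I_6 -> R.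

Definition sc (R : realType) (D : dform R) (i j k : 'I_6) : R :=
  if (i < j)%N then - D k i j else if (j < i)%N then D k j i else 0.

Definition lbr (R : realType) (D : dform R) (u v : 'rV[R]_6) : 'rV[R]_6 :=
  \row_k \sum_(i < 6) \sum_(j < 6) u 0 i * v 0 j * sc D i j k.

Definition lie_iso (R : realType) (D1 D2 : dform R) : Prop :=
  exists A : 'M[R]_6, A \in unitmx /\
    forall u v : 'rV[R]_6, lbr D1 u v *m A = lbr D2 (u *m A) (v *m A).

Definition gxy (R : realType) (x1 x2 y1 y2 y3 : R) : dform R :=
  fun k i j =>
  let a := x2 * y1 - x1 * y2 in let b := x1 * y3 in let c := x2 * y3 in
  let p := x1 * y1 in let q := x1 * y3 - y2 * x2 in let r := x2 * y1 in
  match nat_of_ord k, nat_of_ord i, nat_of_ord j with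
  | 0, 2, 4 => a | 0, 2, 5 => - b | 0, 3, 4 => - b | 0, 3, 5 => - c
  | 2, 0, 4 => - a | 2, 0, 5 => b | 2, 1, 4 => b | 2, 1, 5 => c
  | 4, 0, 2 => a | 4, 0, 3 => - b | 4, 1, 2 => - b | 4, 1, 3 => - c
  | 1, 2, 4 => p | 1, 3, 5 => - q | 1, 2, 5 => r | 1, 3, 4 => r
  | 3, 0, 4 => - p | 3, 1, 5 => q | 3, 0, 5 => - r | 3, 1, 4 => - r
  | 5, 0, 2 => p | 5, 1, 3 => - q | 5, 0, 3 => r | 5, 1, 2 => r
  | _, _, _ => 0
  end.

Definition so3_so3 (R : realType) : dform R := fun k i j =>
  match nat_of_ord k, nat_of_ord i, nat_of_ord j with
  | 0, 1, 2 => 1 | 1, 0, 2 => -1 | 2, 0, 1 => 1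
  | 3, 4, 5 => 1 | 4, 3, 5 => -1 | 5, 3, 4 => 1
  | _, _, _ => 0 end.

(* so(3,C) as a real Lie algebra (Maurer-Cartan dz^1 = z^2 z^3 etc. with
   z^k = e^k + i e^{k+3}):
   de^1 = e23 - e56, de^2 = -e13 + e46, de^3 = e12 - e45,
   de^4 = e26 - e35, de^5 = -e16 + e34, de^6 = e15 - e24 *)
Definition so3C (R : realType) : dform R := fun k i j =>
  match nat_of_ord k, nat_of_ord i, nat_of_ord j with
  | 0, 1, 2 => 1 | 0, 4, 5 => -1
  | 1, 0, 2 => -1 | 1, 3, 5 => 1
  | 2, 0, 1 => 1 | 2, 3, 4 => -1
  | 3, 1, 5 => 1 | 3, 2, 4 => -1
  | 4, 0, 5 => -1 | 4, 2, 3 => 1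
  | 5, 0, 4 => 1 | 5, 1, 3 => -1
  | _, _, _ => 0 end.

Definition so3_ltimes_R3 (R : realType) : dform R := fun k i j =>
  match nat_of_ord k, nat_of_ord i, nat_of_ord j with
  | 0, 1, 2 => 1 | 1, 0, 2 => -1 | 2, 0, 1 => 1
  | 3, 1, 5 => 1 | 3, 2, 4 => -1
  | 4, 0, 5 => -1 | 4, 2, 3 => 1
  | 5, 0, 4 => 1 | 5, 1, 3 => -1
  | _, _, _ => 0 end.

Definition so3_oplus_R3 (R : realType) : dform R := fun k i j =>
  match nat_of_ord k, nat_of_ord i, nat_of_ord j with
  | 0, 1, 2 => 1 | 1, 0, 2 => -1 | 2, 0, 1 => 1
  | _, _, _ => 0 end.

Definition nil_alg (R : realType) : dform R := fun k i j =>
  match nat_of_ord k, nat_of_ord i, nat_of_ord j with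
  | 3, 0, 1 => 1 | 4, 0, 2 => 1 | 5, 1, 2 => 1
  | _, _, _ => 0 end.

Definition Delta (R : realType) (y1 y2 y3 : R) : R := y2 ^+ 2 - 4 * y1 * y3.
Definition Res (R : realType) (x1 x2 y1 y2 y3 : R) : R :=
  x2 ^+ 2 * y1 + y3 * x1 ^+ 2 - y2 * x2 * x1.

(* A point of M = RP^1 x RP^2 is represented by (x1,x2,y1,y2,y3) with
   (x1,x2) <> 0 and (y1,y2,y3) <> 0; all the loci below are invariant
   under independent nonzero scalings of x and y. *)
Definition repM (R : realType) (x1 x2 y1 y2 y3 : R) : Prop :=
  (x1, x2) <> (0, 0) /\ (y1, y2, y3) <> (0, 0, 0).

Definition inMplus (R : realType) (x1 x2 y1 y2 y3 : R) : Prop :=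
  repM x1 x2 y1 y2 y3 /\ 0 < Delta y1 y2 y3 /\ Res x1 x2 y1 y2 y3 != 0.
Definition inMminus (R : realType) (x1 x2 y1 y2 y3 : R) : Prop :=
  repM x1 x2 y1 y2 y3 /\ Delta y1 y2 y3 < 0 /\ Res x1 x2 y1 y2 y3 != 0.
Definition inS1 (R : realType) (x1 x2 y1 y2 y3 : R) : Prop :=
  repM x1 x2 y1 y2 y3 /\ Delta y1 y2 y3 = 0.
Definition inS2 (R : realType) (x1 x2 y1 y2 y3 : R) : Prop :=
  repM x1 x2 y1 y2 y3 /\ Res x1 x2 y1 y2 y3 = 0.
Definition inC (R : realType) (x1 x2 y1 y2 y3 : R) : Prop :=
  inS1 x1 x2 y1 y2 y3 /\ inS2 x1 x2 y1 y2 y3.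
Definition inU (R : realType) (x1 x2 y1 y2 y3 : R) : Prop :=
  repM x1 x2 y1 y2 y3 /\ ~ inS1 x1 x2 y1 y2 y3 /\ ~ inS2 x1 x2 y1 y2 y3.

(* A path in M lying in a (scaling-invariant) set P, from [p] to [q]:
   by path lifting for the double covers S^n -> RP^n this is the same as a
   continuous path in the cover (R^2\0) x (R^3\0) staying in P on [0,1],
   starting at p and ending at (lambda q_x, mu q_y) with lambda, mu <> 0. *)
Definition path_in (R : realType) (P : R -> R -> R -> R -> R -> Prop)
  (p q : R * R * R * R * R) : Prop :=
  let: (p1, p2, p3, p4, p5) := p in
  let: (q1, q2, q3, q4, q5) := q in
  exists (g1 g2 g3 g4 g5 : R -> R) (lam mu : R),
    [/\ continuous g1, continuous g2, continuous g3, continuous g4 & continuous g5] /\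
    lam != 0 /\ mu != 0 /\
    [/\ g1 0 = p1, g2 0 = p2, g3 0 = p3, g4 0 = p4 & g5 0 = p5] /\
    [/\ g1 1 = lam * q1, g2 1 = lam * q2, g3 1 = mu * q3, g4 1 = mu * q4
      & g5 1 = mu * q5] /\
    (forall t : R, 0 <= t <= 1 -> P (g1 t) (g2 t) (g3 t) (g4 t) (g5 t)).

Definition in5 (R : realType) (P : R -> R -> R -> R -> R -> Prop)
  (p : R * R * R * R * R) : Prop :=
  let: (p1, p2, p3, p4, p5) := p in P p1 p2 p3 p4 p5.

(* "U has exactly the two connected components A and B":
   U is the disjoint union of A and B, A and B are nonempty and
   path-connected (within themselves), and no path in U joins A to B. *)
Definition two_components (R : realType) (U A B : R -> R -> R -> R -> R -> Prop) : Prop :=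
  (forall p, in5 U p <-> in5 A p \/ in5 B p) /\
  (forall p, ~ (in5 A p /\ in5 B p)) /\
  (exists p, in5 A p) /\ (exists p, in5 B p) /\
  (forall p q, in5 A p -> in5 A q -> path_in A p q) /\
  (forall p q, in5 B p -> in5 B q -> path_in B p q) /\
  (forall p q, in5 A p -> in5 B q -> ~ path_in U p q).

(* Over R, y is a product m n of linear forms on M_+, and c (p^2 + q^2) with p, q
   independent on M_-; on S_1 it is a multiple of a square m^2, on S_2 it is
   divisible by x, and on C it is a multiple of x^2.  In each case an explicit
   change of basis built from x and these factors identifies g_{x,y} with the
   model algebra.
   Delta is continuous and has opposite signs on M_+ and M_-, so by the
   intermediate value theorem a path from M_+ to M_- meets S_1.  Two points of
   M_- are joined by a segment once y is rescaled so that the leading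
   coefficients have the same sign, as the forms with Delta < 0 and y1 > 0 form
   a convex cone.  On M_+ the group GL_2 acts by substitution with every point
   in the orbit of (x, y) = (u1 + u2, u1 u2); up to sign the matrix moving one
   point to another has positive determinant and nonnegative trace, and then the
   segment from the identity to it stays in GL_2. *)

From mathcomp Require Import all_boot all_order all_algebra.
From mathcomp Require Import all_classical all_reals topology normedtype.
From mathcomp Require Import ring lra.
Import Order.TTheory GRing.Theory Num.Theory.
Import numFieldNormedType.Exports.

Set Implicit Arguments.
Unset Strict Implicit.
Unset Printing Implicit Defensive.

Local Open Scope ring_scope.

(** * Lie brackets given by structure constants *)

Section Bracket.
Variable R : realType.
Implicit Types (D : dform R) (u v : 'rV[R]_6).

Lemma lbr_suml D (a : 'I_6 -> R) (x : 'I_6 -> 'rV[R]_6) v :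
  lbr D (\sum_l a l *: x l) v = \sum_l a l *: lbr D (x l) v.
Proof.
apply/rowP => k; rewrite !mxE summxE.
under [RHS]eq_bigr => l _ do rewrite !mxE big_distrr /=.
rewrite [RHS]exchange_big /=; apply: eq_bigr => i _.
under [RHS]eq_bigr => l _ do rewrite big_distrr /=.
rewrite [RHS]exchange_big /=; apply: eq_bigr => j _.
rewrite summxE !big_distrl /=; apply: eq_bigr => l _.
by rewrite !mxE !mulrA.
Qed.

Lemma lbr_sumr D (a : 'I_6 -> R) (x : 'I_6 -> 'rV[R]_6) u :
  lbr D u (\sum_l a l *: x l) = \sum_l a l *: lbr D u (x l).
Proof.
apply/rowP => k; rewrite !mxE summxE.
under [RHS]eq_bigr => l _ do rewrite !mxE big_distrr /=.
rewrite [RHS]exchange_big /=; apply: eq_bigr => i _.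
under [RHS]eq_bigr => l _ do rewrite big_distrr /=.
rewrite [RHS]exchange_big /=; apply: eq_bigr => j _.
rewrite summxE big_distrr !big_distrl /=; apply: eq_bigr => l _.
by rewrite !mxE; ring.
Qed.

Lemma lbr_delta_mx D i j : lbr D (delta_mx 0 i) (delta_mx 0 j) = \row_k sc D i j k.
Proof.
have pick (l : 'I_6) (F : 'I_6 -> R) :
    \sum_(a < 6) (((0 : 'I_1) == 0) && (a == l))%:R * F a = F l.
  by rewrite (bigD1 l) //= eqxx mul1r big1 ?addr0 // => a /negbTE->; rewrite mul0r.
apply/rowP => k; rewrite !mxE.
under eq_bigr => a _ do under eq_bigr => b _ do rewrite !mxE -mulrA.
by under eq_bigr => a _ do rewrite -big_distrr /= pick; rewrite pick.
Qed.

Lemma sc_antisym D i j k : sc D j i k = - sc D i j k.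
Proof. by rewrite /sc; case: (ltngtP i j); rewrite ?opprK ?oppr0. Qed.

Lemma lbr_antisym D u v : lbr D v u = - lbr D u v.
Proof.
apply/rowP => k; rewrite !mxE -sumrN exchange_big /=; apply: eq_bigr => i _.
by rewrite -sumrN; apply: eq_bigr => j _; rewrite sc_antisym; ring.
Qed.

Lemma lbr_alternating D u : lbr D u u = 0.
Proof.
have : 2%:R *: lbr D u u = 0 by rewrite scaler_nat mulr2n {1}lbr_antisym addNr.
by move/eqP; rewrite scaler_eq0 pnatr_eq0 => /eqP.
Qed.

Lemma lie_iso_by_basis D1 D2 (A : 'M[R]_6) : A \in unitmx ->
  (forall i j : 'I_6, (i < j)%N -> (\row_k sc D1 i j k) *m A = lbr D2 (row i A) (row j A)) ->
  lie_iso D1 D2.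
Proof.
move=> uA hA; exists A; split => // u v.
have {}hA i j : (\row_k sc D1 i j k) *m A = lbr D2 (row i A) (row j A).
  case: (ltngtP i j) => [|ji|/val_inj->]; first exact: hA.
    rewrite lbr_antisym -hA //; apply/rowP => k.
    by rewrite !mxE -sumrN; apply: eq_bigr => l _; rewrite !mxE sc_antisym mulNr.
  have -> : \row_k sc D1 j j k = 0 by apply/rowP => k; rewrite !mxE /sc ltnn.
  by rewrite mul0mx lbr_alternating.
have -> : lbr D1 u v =
    lbr D1 (\sum_i u 0 i *: delta_mx 0 i) (\sum_j v 0 j *: delta_mx 0 j).
  by rewrite -!row_sum_delta.
rewrite [u *m A]mulmx_sum_row [v *m A]mulmx_sum_row.
rewrite !lbr_suml mulmx_suml; apply: eq_bigr => i _.
rewrite !lbr_sumr -scalemxAl mulmx_suml; congr (_ *: _); apply: eq_bigr => j _.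
by rewrite -scalemxAl lbr_delta_mx hA.
Qed.

Lemma unitmx_of_mul_scalar n (A B : 'M[R]_n) (c : R) :
  c != 0 -> A *m B = c%:M -> A \in unitmx.
Proof.
move=> c0 AB; have [] // := @mulmx1_unit _ _ A (c^-1 *: B).
by rewrite -scalemxAr AB scale_scalar_mx mulVf.
Qed.

Lemma sum_ord6 (F : 'I_6 -> R) : \sum_(i < 6) F i =
  F (@Ordinal 6 0 isT) + F (@Ordinal 6 1 isT) + F (@Ordinal 6 2 isT) +
  F (@Ordinal 6 3 isT) + F (@Ordinal 6 4 isT) + F (@Ordinal 6 5 isT).
Proof.
rewrite !big_ord_recl big_ord0 addr0 !addrA.
by congr (_ + _ + _ + _ + _ + _); congr F; apply: val_inj.
Qed.

(* The matrix [[b11, b12], [b21, b22]] applied simultaneously to the pairs of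
   basis vectors (e_1, e_2), (e_3, e_4), (e_5, e_6), with images in the
   planes spanned by (e_1, e_4), (e_2, e_5), (e_3, e_6). *)
Definition pair_mx (b11 b12 b21 b22 : R) : 'M[R]_6 := \matrix_(i, j)
  match nat_of_ord i, nat_of_ord j with
  | 0, 0 | 2, 1 | 4, 2 => b11 | 0, 3 | 2, 4 | 4, 5 => b12
  | 1, 0 | 3, 1 | 5, 2 => b21 | 1, 3 | 3, 4 | 5, 5 => b22
  | _, _ => 0 end.

(* The same with target planes (e_1, e_6), (e_2, -e_5), (e_3, e_4). *)
Definition twisted_pair_mx (b11 b12 b21 b22 : R) : 'M[R]_6 := \matrix_(i, j)
  match nat_of_ord i, nat_of_ord j with
  | 0, 0 | 2, 1 | 4, 2 => b11 | 0, 5 | 4, 3 => b12 | 2, 4 => - b12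
  | 1, 0 | 3, 1 | 5, 2 => b21 | 1, 5 | 5, 3 => b22 | 3, 4 => - b22
  | _, _ => 0 end.

Lemma pair_mx_unit b11 b12 b21 b22 :
  b11 * b22 - b12 * b21 != 0 -> pair_mx b11 b12 b21 b22 \in unitmx.
Proof.
move=> d0; apply: (unitmx_of_mul_scalar (B := \matrix_(i, j)
  match nat_of_ord i, nat_of_ord j with
  | 0, 0 | 1, 2 | 2, 4 => b22 | 0, 1 | 1, 3 | 2, 5 => - b12
  | 3, 0 | 4, 2 | 5, 4 => - b21 | 3, 1 | 4, 3 | 5, 5 => b11
  | _, _ => 0 end) d0).
apply/matrixP => i j; rewrite !mxE sum_ord6 !mxE /=.
by case: i => [[|[|[|[|[|[|i]]]]]] ?] //; case: j => [[|[|[|[|[|[|j]]]]]] ?] //=; ring.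
Qed.

Lemma twisted_pair_mx_unit b11 b12 b21 b22 :
  b11 * b22 - b12 * b21 != 0 -> twisted_pair_mx b11 b12 b21 b22 \in unitmx.
Proof.
move=> d0; apply: (unitmx_of_mul_scalar (B := \matrix_(i, j)
  match nat_of_ord i, nat_of_ord j with
  | 0, 0 | 1, 2 | 2, 4 => b22 | 0, 1 | 1, 3 | 2, 5 => - b12
  | 3, 4 | 5, 0 => - b21 | 4, 2 => b21 | 3, 5 | 5, 1 => b11 | 4, 3 => - b11
  | _, _ => 0 end) d0).
apply/matrixP => i j; rewrite !mxE sum_ord6 !mxE /=.
by case: i => [[|[|[|[|[|[|i]]]]]] ?] //; case: j => [[|[|[|[|[|[|j]]]]]] ?] //=; ring.
Qed.

End Bracket.

Section Isomorphisms.
Variable R : realType.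

Ltac check_brackets :=
  let i := fresh "i" in let j := fresh "j" in let k := fresh "k" in
  let ij := fresh "ij" in
  move=> i j ij; apply/rowP => k; rewrite !mxE sum_ord6;
  under eq_bigr do rewrite sum_ord6;
  rewrite sum_ord6 !mxE /=;
  case: i ij => [[|[|[|[|[|[|i]]]]]] ?] //; case: j => [[|[|[|[|[|[|j]]]]]] ?] //= ?;
  case: k => [[|[|[|[|[|[|k]]]]]] ?] //=; rewrite /sc;
  unfold gxy, so3_so3, so3C, so3_ltimes_R3, so3_oplus_R3, nil_alg; simpl; ring.

Lemma lie_iso_gxy_so3_so3 (x1 x2 m1 m2 n1 n2 : R) :
  x2 * m1 - x1 * m2 != 0 -> x2 * n1 - x1 * n2 != 0 -> m1 * n2 - m2 * n1 != 0 ->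
  lie_iso (gxy x1 x2 (m1 * n1) (m1 * n2 + m2 * n1) (m2 * n2)) (@so3_so3 R).
Proof.
move=> xm xn mn; set a := x2 * m1 - x1 * m2; set b := x2 * n1 - x1 * n2.
apply: (@lie_iso_by_basis _ _ _ (pair_mx (b * m1) (a * n1) (b * m2) (a * n2))).
  apply: pair_mx_unit.
  have -> : b * m1 * (a * n2) - a * n1 * (b * m2) = b * a * (m1 * n2 - m2 * n1) by ring.
  by rewrite !mulf_neq0.
rewrite {}/a {}/b; check_brackets.
Qed.

Lemma lie_iso_gxy_so3C (x1 x2 c p1 p2 q1 q2 : R) : c != 0 ->
  (x2 * p1 - x1 * p2) ^+ 2 + (x2 * q1 - x1 * q2) ^+ 2 != 0 -> p1 * q2 - q1 * p2 != 0 ->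
  lie_iso (gxy x1 x2 (c * (p1 ^+ 2 + q1 ^+ 2)) (c * (2 * (p1 * p2 + q1 * q2)))
     (c * (p2 ^+ 2 + q2 ^+ 2))) (@so3C R).
Proof.
move=> c0 xpq pq; set a := x2 * p1 - x1 * p2; set b := x2 * q1 - x1 * q2.
apply: (@lie_iso_by_basis _ _ _ (pair_mx (c * (a * p1 + b * q1)) (c * (a * q1 - b * p1))
  (c * (a * p2 + b * q2)) (c * (a * q2 - b * p2)))).
  apply: pair_mx_unit.
  have -> : c * (a * p1 + b * q1) * (c * (a * q2 - b * p2)) -
    c * (a * q1 - b * p1) * (c * (a * p2 + b * q2)) =
    c * c * (a ^+ 2 + b ^+ 2) * (p1 * q2 - q1 * p2) by ring.
  by rewrite !mulf_neq0.
rewrite {}/a {}/b; check_brackets.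
Qed.

Lemma lie_iso_gxy_so3_ltimes_R3 (x1 x2 c m1 m2 : R) : c != 0 -> x2 * m1 - x1 * m2 != 0 ->
  lie_iso (gxy x1 x2 (c * m1 ^+ 2) (c * (2 * m1 * m2)) (c * m2 ^+ 2)) (@so3_ltimes_R3 R).
Proof.
move=> c0 xm; set a := x2 * m1 - x1 * m2.
apply: (@lie_iso_by_basis _ _ _ (pair_mx (c * (a * m1)) (c * x1) (c * (a * m2)) (c * x2))).
  apply: pair_mx_unit.
  have -> : c * (a * m1) * (c * x2) - c * x1 * (c * (a * m2)) = c * c * (a * a).
    by rewrite /a; ring.
  by rewrite !mulf_neq0.
rewrite {}/a; check_brackets.
Qed.

Lemma lie_iso_gxy_so3_oplus_R3 (x1 x2 n1 n2 : R) : x2 * n1 - x1 * n2 != 0 ->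
  lie_iso (gxy x1 x2 (x1 * n1) (x1 * n2 + x2 * n1) (x2 * n2)) (@so3_oplus_R3 R).
Proof.
move=> xn; set b := x2 * n1 - x1 * n2.
apply: (@lie_iso_by_basis _ _ _ (pair_mx (b * x1) n1 (b * x2) n2)).
  apply: pair_mx_unit.
  have -> : b * x1 * n2 - n1 * (b * x2) = - (b * b) by rewrite /b; ring.
  by rewrite oppr_eq0 mulf_neq0.
rewrite {}/b; check_brackets.
Qed.

Lemma lie_iso_gxy_nil_alg (x1 x2 c : R) : c != 0 -> x1 ^+ 2 + x2 ^+ 2 != 0 ->
  lie_iso (gxy x1 x2 (c * x1 ^+ 2) (c * (2 * x1 * x2)) (c * x2 ^+ 2)) (@nil_alg R).
Proof.
move=> c0 x0; set r := c * (x1 ^+ 2 + x2 ^+ 2).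
apply: (@lie_iso_by_basis _ _ _ (twisted_pair_mx (r * x1) (- (r * x2)) (r * x2) (r * x1))).
  apply: twisted_pair_mx_unit.
  have -> : r * x1 * (r * x1) - - (r * x2) * (r * x2) = r * r * (x1 ^+ 2 + x2 ^+ 2) by ring.
  by rewrite !mulf_neq0.
rewrite {}/r; check_brackets.
Qed.

End Isomorphisms.

(** * Binary quadratic forms *)

Section BinaryQuadratics.
Variable R : realType.

(* Linear forms m1 u1 + m2 u2 and quadratic forms y1 u1^2 + y2 u1 u2 + y3 u2^2
   are given by their coefficients; [x2 * m1 - x1 * m2] is zero iff the forms
   x and m are proportional. *)

Lemma sqr_add_gt0 (a b : R) : (a, b) <> (0, 0) -> 0 < a ^+ 2 + b ^+ 2.
Proof.
move=> ab; rewrite lt_def paddr_eq0 ?sqr_ge0 // !sqrf_eq0 addr_ge0 ?sqr_ge0 // andbT.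
by apply/negP => /andP[/eqP a0 /eqP b0]; apply: ab; rewrite a0 b0.
Qed.

Lemma Delta_scale (c y1 y2 y3 : R) :
  Delta (c * y1) (c * y2) (c * y3) = c ^+ 2 * Delta y1 y2 y3.
Proof. by rewrite /Delta; ring. Qed.

Lemma Delta_mul (m1 m2 n1 n2 : R) :
  Delta (m1 * n1) (m1 * n2 + m2 * n1) (m2 * n2) = (m1 * n2 - m2 * n1) ^+ 2.
Proof. by rewrite /Delta; ring. Qed.

Lemma Res_mul (x1 x2 m1 m2 n1 n2 : R) :
  Res x1 x2 (m1 * n1) (m1 * n2 + m2 * n1) (m2 * n2) =
  (x2 * m1 - x1 * m2) * (x2 * n1 - x1 * n2).
Proof. by rewrite /Res; ring. Qed.

Lemma Res_square (x1 x2 c m1 m2 : R) :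
  Res x1 x2 (c * m1 ^+ 2) (c * (2 * m1 * m2)) (c * m2 ^+ 2) = c * (x2 * m1 - x1 * m2) ^+ 2.
Proof. by rewrite /Res; ring. Qed.

Lemma Res_sum_squares (x1 x2 c p1 p2 q1 q2 : R) :
  Res x1 x2 (c * (p1 ^+ 2 + q1 ^+ 2)) (c * (2 * (p1 * p2 + q1 * q2)))
    (c * (p2 ^+ 2 + q2 ^+ 2)) =
  c * ((x2 * p1 - x1 * p2) ^+ 2 + (x2 * q1 - x1 * q2) ^+ 2).
Proof. by rewrite /Res; ring. Qed.

Lemma Delta_gt0_split (y1 y2 y3 : R) : 0 < Delta y1 y2 y3 ->
  exists m1 m2 n1 n2 : R, [/\ y1 = m1 * n1, y2 = m1 * n2 + m2 * n1 & y3 = m2 * n2].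
Proof.
move=> hD; have [->|y10] := eqVneq y1 0; first by exists 0, 1, y2, y3; split; ring.
set s := Num.sqrt (Delta y1 y2 y3).
have s2 : s ^+ 2 = y2 ^+ 2 - 4 * y1 * y3 by rewrite sqr_sqrtr ?ltW.
exists y1, ((y2 - s) / 2), 1, ((y2 + s) / (2 * y1)); split; first by rewrite mulr1.
  by field.
have -> : (y2 - s) / 2 * ((y2 + s) / (2 * y1)) = (y2 ^+ 2 - s ^+ 2) / (4 * y1) by field.
by rewrite s2; field.
Qed.

Lemma Delta_lt0_y1_neq0 (y1 y2 y3 : R) : Delta y1 y2 y3 < 0 -> y1 != 0.
Proof. by move=> hD; apply/eqP => y10; move: hD; rewrite /Delta y10; nra. Qed.

Lemma Delta_lt0_sum_squares (y1 y2 y3 : R) : Delta y1 y2 y3 < 0 ->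
  exists c p1 p2 q1 q2 : R, [/\ c != 0, y1 = c * (p1 ^+ 2 + q1 ^+ 2),
    y2 = c * (2 * (p1 * p2 + q1 * q2)), y3 = c * (p2 ^+ 2 + q2 ^+ 2) &
    p1 * q2 - q1 * p2 != 0].
Proof.
move=> hD; have y10 := Delta_lt0_y1_neq0 hD.
set s := Num.sqrt (- Delta y1 y2 y3).
have s2 : s ^+ 2 = 4 * y1 * y3 - y2 ^+ 2 by rewrite sqr_sqrtr ?oppr_ge0 ?ltW // /Delta opprB.
have s0 : s != 0 by rewrite sqrtr_eq0 -ltNge oppr_gt0.
exists y1, 1, (y2 / (2 * y1)), 0, (s / (2 * y1)); split => //.
- by rewrite expr1n expr0n addr0 mulr1.
- by field.
- have -> : (y2 / (2 * y1)) ^+ 2 + (s / (2 * y1)) ^+ 2 = (y2 ^+ 2 + s ^+ 2) / (4 * y1 ^+ 2).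
    by field.
  by rewrite s2; field.
- by rewrite mul0r subr0 mul1r mulf_neq0 // invr_eq0 mulf_neq0 // pnatr_eq0.
Qed.

Lemma Delta_eq0_square (y1 y2 y3 : R) : Delta y1 y2 y3 = 0 -> (y1, y2, y3) <> (0, 0, 0) ->
  exists c m1 m2 : R,
    [/\ c != 0, y1 = c * m1 ^+ 2, y2 = c * (2 * m1 * m2) & y3 = c * m2 ^+ 2].
Proof.
rewrite /Delta => hD y0; have [y10|y10] := eqVneq y1 0.
  have y20 : y2 = 0 by move: hD; rewrite y10; nra.
  have y30 : y3 != 0 by apply/eqP => y30; apply: y0; rewrite y10 y20 y30.
  by exists y3, 0, 1; split; rewrite // ?y10 ?y20; ring.
exists y1, 1, (y2 / (2 * y1)); split => //; first by ring.
  by field.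
have -> : y1 * (y2 / (2 * y1)) ^+ 2 = y2 ^+ 2 / (4 * y1) by field.
have -> : y2 ^+ 2 = 4 * y1 * y3 by apply/eqP; rewrite -subr_eq0 hD.
by field.
Qed.

Lemma Res_eq0_divisible (x1 x2 y1 y2 y3 : R) :
  (x1, x2) <> (0, 0) -> Res x1 x2 y1 y2 y3 = 0 ->
  exists n1 n2 : R, [/\ y1 = x1 * n1, y2 = x1 * n2 + x2 * n1 & y3 = x2 * n2].
Proof.
rewrite /Res => x0 hR; have [x10|x10] := eqVneq x1 0.
  have x20 : x2 != 0 by apply/eqP => x20; apply: x0; rewrite x10 x20.
  have y10 : y1 = 0.
    have : x2 ^+ 2 * y1 = 0 by rewrite -hR x10; ring.
    by move/eqP; rewrite mulf_eq0 expf_eq0 (negbTE x20) andbF => /eqP.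
  by exists (y2 / x2), (y3 / x2); split; rewrite ?y10 ?x10; field.
have y3E : y3 = (y2 * x2 * x1 - x2 ^+ 2 * y1) / x1 ^+ 2.
  apply: (mulIf (expf_neq0 2 x10)); rewrite divfK ?expf_neq0 //.
  by apply/eqP; rewrite -subr_eq0 -hR; apply/eqP; ring.
by exists (y1 / x1), ((y2 * x1 - x2 * y1) / x1 ^+ 2); split; rewrite ?y3E; field.
Qed.

Lemma proportional_of_cross_eq0 (x1 x2 n1 n2 : R) : (x1, x2) <> (0, 0) ->
  x1 * n2 - x2 * n1 = 0 -> exists k : R, n1 = k * x1 /\ n2 = k * x2.
Proof.
move=> x0 /eqP; rewrite subr_eq0 => /eqP nx; have [x10|x10] := eqVneq x1 0.
  have x20 : x2 != 0 by apply/eqP => x20; apply: x0; rewrite x10 x20.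
  exists (n2 / x2); split; last by field.
  by apply: (mulfI x20); rewrite -nx x10; ring.
exists (n1 / x1); split; first by field.
by apply: (mulfI x10); rewrite nx; field.
Qed.

Definition qform (y1 y2 y3 v1 v2 : R) := y1 * v1 ^+ 2 + y2 * v1 * v2 + y3 * v2 ^+ 2.

Lemma qform_definite (y1 y2 y3 v1 v2 : R) : Delta y1 y2 y3 < 0 -> (v1, v2) <> (0, 0) ->
  0 < y1 * qform y1 y2 y3 v1 v2.
Proof.
move=> hD v0; have y10 := Delta_lt0_y1_neq0 hD.
have [v20|v20] := eqVneq v2 0.
  have v10 : v1 != 0 by apply/eqP => v10; apply: v0; rewrite v10 v20.
  have -> : y1 * qform y1 y2 y3 v1 v2 = (y1 * v1) ^+ 2 by rewrite /qform v20; ring.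
  by rewrite exprn_even_gt0 //= mulf_neq0.
have E : 4 * (y1 * qform y1 y2 y3 v1 v2) =
    (2 * y1 * v1 + y2 * v2) ^+ 2 - Delta y1 y2 y3 * v2 ^+ 2 by rewrite /qform /Delta; ring.
have v2sq : 0 < v2 ^+ 2 by rewrite exprn_even_gt0.
have := sqr_ge0 (2 * y1 * v1 + y2 * v2); nra.
Qed.

Lemma Res_neq0_of_Delta_lt0 (x1 x2 y1 y2 y3 : R) :
  Delta y1 y2 y3 < 0 -> (x1, x2) <> (0, 0) -> Res x1 x2 y1 y2 y3 != 0.
Proof.
move=> hD x0; have -> : Res x1 x2 y1 y2 y3 = qform y1 y2 y3 x2 (- x1).
  by rewrite /Res /qform; ring.
apply/eqP => hq; suff : (x2, - x1) <> (0, 0).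
  by move/(qform_definite hD); rewrite hq mulr0 ltxx.
by case=> x20 /eqP; rewrite oppr_eq0 => /eqP x10; apply: x0; rewrite x10 x20.
Qed.

End BinaryQuadratics.

Section Classification.
Variable R : realType.
Variables x1 x2 y1 y2 y3 : R.

Lemma lie_iso_gxy_of_Mplus :
  inMplus x1 x2 y1 y2 y3 -> lie_iso (gxy x1 x2 y1 y2 y3) (@so3_so3 R).
Proof.
case=> _ [hD hR]; have [m1 [m2 [n1 [n2 [e1 e2 e3]]]]] := Delta_gt0_split hD.
move: hD hR; rewrite e1 e2 e3 Delta_mul Res_mul mulf_eq0 negb_or => hD /andP[xm xn].
by apply: lie_iso_gxy_so3_so3; rewrite // -sqrf_eq0 gt_eqF.
Qed.

Lemma lie_iso_gxy_of_Mminus :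
  inMminus x1 x2 y1 y2 y3 -> lie_iso (gxy x1 x2 y1 y2 y3) (@so3C R).
Proof.
case=> _ [hD hR]; have [c [p1 [p2 [q1 [q2 [c0 e1 e2 e3 pq]]]]]] := Delta_lt0_sum_squares hD.
move: hR; rewrite e1 e2 e3 Res_sum_squares mulf_eq0 negb_or => /andP[_ xpq].
exact: lie_iso_gxy_so3C.
Qed.

Lemma lie_iso_gxy_of_S1 : inS1 x1 x2 y1 y2 y3 -> ~ inC x1 x2 y1 y2 y3 ->
  lie_iso (gxy x1 x2 y1 y2 y3) (@so3_ltimes_R3 R).
Proof.
case=> -[x0 y0] hD notC; have hR : Res x1 x2 y1 y2 y3 != 0.
  by apply/eqP => hR; apply: notC.
have [c [m1 [m2 [c0 e1 e2 e3]]]] := Delta_eq0_square hD y0.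
move: hR; rewrite e1 e2 e3 Res_square mulf_eq0 negb_or sqrf_eq0 => /andP[_ xm].
exact: lie_iso_gxy_so3_ltimes_R3.
Qed.

Lemma lie_iso_gxy_of_S2 : inS2 x1 x2 y1 y2 y3 -> ~ inC x1 x2 y1 y2 y3 ->
  lie_iso (gxy x1 x2 y1 y2 y3) (@so3_oplus_R3 R).
Proof.
case=> -[x0 y0] hR notC; have hD : Delta y1 y2 y3 != 0.
  by apply/eqP => hD; apply: notC.
have [n1 [n2 [e1 e2 e3]]] := Res_eq0_divisible x0 hR.
move: hD; rewrite e1 e2 e3 Delta_mul sqrf_eq0 => xn.
by apply: lie_iso_gxy_so3_oplus_R3; rewrite -oppr_eq0 opprB.
Qed.

Lemma lie_iso_gxy_of_C :
  inC x1 x2 y1 y2 y3 -> lie_iso (gxy x1 x2 y1 y2 y3) (@nil_alg R).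
Proof.
case=> -[[x0 y0] hD] [_ hR].
have [n1 [n2 [e1 e2 e3]]] := Res_eq0_divisible x0 hR.
move: hD; rewrite e1 e2 e3 Delta_mul => /eqP; rewrite sqrf_eq0 => /eqP xn.
have [k [n1E n2E]] := proportional_of_cross_eq0 x0 xn.
have k0 : k != 0.
  by apply/eqP => k0; apply: y0; rewrite e1 e2 e3 n1E n2E k0; congr (_, _, _); ring.
rewrite n1E n2E.
have -> : x1 * (k * x1) = k * x1 ^+ 2 by ring.
have -> : x1 * (k * x2) + x2 * (k * x1) = k * (2 * x1 * x2) by ring.
have -> : x2 * (k * x2) = k * x2 ^+ 2 by ring.
by apply: lie_iso_gxy_nil_alg; rewrite // gt_eqF // sqr_add_gt0.
Qed.

End Classification.

(** * Paths in M *)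

Section Continuity.
Variable R : realType.
Implicit Types f g : R -> R.

Lemma continuous_id_fun : continuous (fun t : R => t).
Proof. by move=> x; exact: cvg_id. Qed.

Lemma continuous_add_fun f g :
  continuous f -> continuous g -> continuous (fun t => f t + g t).
Proof. by move=> hf hg x; exact: (continuousD (hf x) (hg x)). Qed.

Lemma continuous_mul_fun f g :
  continuous f -> continuous g -> continuous (fun t => f t * g t).
Proof. by move=> hf hg x; exact: (continuousM (hf x) (hg x)). Qed.

Lemma continuous_opp_fun f : continuous f -> continuous (fun t => - f t).
Proof. by move=> hf x; exact: (continuousN (hf x)). Qed.

Lemma continuous_exp_fun f n : continuous f -> continuous (fun t => f t ^+ n).
Proof.
move=> hf; elim: n => [|n IH]; first exact: cst_continuous.
by under eq_fun do rewrite exprS; apply: continuous_mul_fun.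
Qed.

End Continuity.

Ltac solve_continuous := repeat first
  [ exact: cst_continuous | exact: continuous_id_fun | assumption
  | apply: continuous_add_fun | apply: continuous_mul_fun
  | apply: continuous_opp_fun | apply: continuous_exp_fun ].

Section Paths.
Variable R : realType.
Local Notation pt := (R * R * R * R * R)%type.

Definition scale_pt (lam mu : R) (p : pt) : pt :=
  let: (x1, x2, y1, y2, y3) := p in (lam * x1, lam * x2, mu * y1, mu * y2, mu * y3).

Lemma path_in_intro (P : R -> R -> R -> R -> R -> Prop) (p q : pt) (g : R -> pt)
    (lam mu : R) :
  continuous (fun t => (g t).1.1.1.1) -> continuous (fun t => (g t).1.1.1.2) ->
  continuous (fun t => (g t).1.1.2) -> continuous (fun t => (g t).1.2) ->
  continuous (fun t => (g t).2) -> lam != 0 -> mu != 0 ->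
  g 0 = p -> g 1 = scale_pt lam mu q -> (forall t, 0 <= t <= 1 -> in5 P (g t)) ->
  path_in P p q.
Proof.
case: p q => [[[[p1 p2] p3] p4] p5] [[[[q1 q2] q3] q4] q5] c1 c2 c3 c4 c5 lam0 mu0 g0 g1 gP.
exists (fun t => (g t).1.1.1.1), (fun t => (g t).1.1.1.2), (fun t => (g t).1.1.2),
  (fun t => (g t).1.2), (fun t => (g t).2), lam, mu.
do 4 (split => //); first by rewrite g0.
split; first by rewrite g1.
by move=> t /gP; case: (g t) => [[[[]]]].
Qed.

Lemma repM_of_Res_neq0 (x1 x2 y1 y2 y3 : R) :
  Res x1 x2 y1 y2 y3 != 0 -> repM x1 x2 y1 y2 y3.
Proof.
move=> hR; split => [[x10 x20]|[y10 y20 y30]]; move: hR;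
  by rewrite /Res ?x10 ?x20 ?y10 ?y20 ?y30 => /eqP; apply; ring.
Qed.

Lemma inMplus_intro (x1 x2 y1 y2 y3 : R) :
  0 < Delta y1 y2 y3 -> Res x1 x2 y1 y2 y3 != 0 -> inMplus x1 x2 y1 y2 y3.
Proof. by move=> hD hR; split; [exact: repM_of_Res_neq0 | split]. Qed.

Lemma inMminus_intro (x1 x2 y1 y2 y3 : R) :
  Delta y1 y2 y3 < 0 -> (x1, x2) <> (0, 0) -> inMminus x1 x2 y1 y2 y3.
Proof.
move=> hD x0; have hR := Res_neq0_of_Delta_lt0 hD x0.
by split; [exact: repM_of_Res_neq0 | split].
Qed.

Definition lerp (a b t : R) := (1 - t) * a + t * b.

Lemma continuous_lerp (a b : R) : continuous (lerp a b).
Proof. by rewrite /lerp; solve_continuous. Qed.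

Lemma lerp_neq0 (a1 a2 b1 b2 t : R) : (a1, a2) <> (0, 0) -> (b1, b2) <> (0, 0) ->
  0 <= a1 * b1 + a2 * b2 -> 0 <= t <= 1 -> (lerp a1 b1 t, lerp a2 b2 t) <> (0, 0).
Proof.
rewrite /lerp => a0 b0 ab /andP[t0 t1] [e1 e2].
have : (1 - t) * (a1 ^+ 2 + a2 ^+ 2) + t * (a1 * b1 + a2 * b2) =
    a1 * ((1 - t) * a1 + t * b1) + a2 * ((1 - t) * a2 + t * b2) by ring.
rewrite e1 e2 !mulr0 addr0 => sum0; have a2_gt0 := sqr_add_gt0 a0.
have t1E : t = 1 by nra.
by apply: b0; move: e1 e2; rewrite t1E subrr !mul0r !mul1r !add0r => -> ->.
Qed.

Lemma lerp_gt0 (a b t : R) : 0 < a -> 0 < b -> 0 <= t <= 1 -> 0 < lerp a b t.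
Proof.
rewrite /lerp => a0 b0 /andP[t0 t1].
have [->|t_neq1] := eqVneq t 1; first by rewrite subrr mul0r add0r mul1r.
have : 0 < (1 - t) * a by rewrite mulr_gt0 // subr_gt0 lt_neqAle t_neq1.
have : 0 <= t * b by rewrite mulr_ge0 // ltW.
lra.
Qed.

(* At the point [(-u2, 2 u1)] the form [u] takes the value [-u1 Delta(u)]; along
   a segment of forms this value is a convex combination of values of definite
   forms of the same sign. *)
Lemma Delta_lerp_lt0 (z1 z2 z3 w1 w2 w3 t : R) :
  Delta z1 z2 z3 < 0 -> Delta w1 w2 w3 < 0 -> 0 < z1 * w1 -> 0 <= t <= 1 ->
  Delta (lerp z1 w1 t) (lerp z2 w2 t) (lerp z3 w3 t) < 0.
Proof.
move=> hz hw zw t01.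
set u1 := lerp z1 w1 t; set u2 := lerp z2 w2 t; set u3 := lerp z3 w3 t.
have z10 := Delta_lt0_y1_neq0 hz; have w10 := Delta_lt0_y1_neq0 hw.
have zu : 0 < z1 * u1.
  rewrite (_ : z1 * u1 = lerp (z1 ^+ 2) (z1 * w1) t); last by rewrite /u1 /lerp; ring.
  by rewrite lerp_gt0 // exprn_even_gt0.
have v0 : (- u2, 2 * u1) <> (0, 0).
  case=> _ /eqP; rewrite mulf_eq0 pnatr_eq0 /= => /eqP u10.
  by move: zu; rewrite u10 mulr0 ltxx.
set v1 := - u2; set v2 := 2 * u1.
have qz := qform_definite hz v0.
have qw : 0 < z1 * qform w1 w2 w3 v1 v2.
  rewrite -(pmulr_rgt0 _ (_ : 0 < w1 ^+ 2)) ?exprn_even_gt0 //.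
  rewrite (_ : w1 ^+ 2 * _ = (z1 * w1) * (w1 * qform w1 w2 w3 v1 v2)); last by ring.
  by rewrite mulr_gt0 // qform_definite.
rewrite -oppr_gt0 -(pmulr_rgt0 _ zu).
rewrite (_ : z1 * u1 * _ = lerp (z1 * qform z1 z2 z3 v1 v2) (z1 * qform w1 w2 w3 v1 v2) t).
  exact: lerp_gt0.
by rewrite /qform /Delta /v1 /v2 /u1 /u2 /u3 /lerp; ring.
Qed.

Lemma exists_sign_mul_ge0 (a : R) : exists2 s : R, s ^+ 2 = 1 & 0 <= s * a.
Proof.
case: (leP 0 a) => a0; first by exists 1; rewrite ?expr1n ?mul1r.
by exists (-1); rewrite ?sqrrN ?expr1n // mulN1r oppr_ge0 ltW.
Qed.

Lemma sign_neq0 (s : R) : s ^+ 2 = 1 -> s != 0.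
Proof.
by move=> s2; apply/eqP => s0; move: s2; rewrite s0 expr0n /= => /eqP; rewrite eq_sym oner_eq0.
Qed.

Lemma path_Mminus (p q : pt) :
  in5 (@inMminus R) p -> in5 (@inMminus R) q -> path_in (@inMminus R) p q.
Proof.
case: p q => [[[[p1 p2] p3] p4] p5] [[[[q1 q2] q3] q4] q5] [[px _] [pD _]] [[qx _] [qD _]].
have [lam lam2 pq_x] := exists_sign_mul_ge0 (p1 * q1 + p2 * q2).
have [mu mu2 pq_y] := exists_sign_mul_ge0 (p3 * q3).
have lam0 := sign_neq0 lam2; have mu0 := sign_neq0 mu2.
apply: (@path_in_intro _ _ _ (fun t => (lerp p1 (lam * q1) t, lerp p2 (lam * q2) t,
  lerp p3 (mu * q3) t, lerp p4 (mu * q4) t, lerp p5 (mu * q5) t)) lam mu) => //=;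
  try exact: continuous_lerp.
- by rewrite /lerp; congr (_, _, _, _, _); ring.
- by rewrite /lerp; congr (_, _, _, _, _); ring.
move=> t t01; apply: inMminus_intro.
  apply: Delta_lerp_lt0 => //; first by rewrite Delta_scale mu2 mul1r.
  have p30 := Delta_lt0_y1_neq0 pD; have q30 := Delta_lt0_y1_neq0 qD.
  by rewrite mulrCA lt_def pq_y andbT !mulf_neq0.
apply: lerp_neq0 => //.
  by case=> /eqP; rewrite mulf_eq0 (negbTE lam0) /= => /eqP q10 /eqP;
    rewrite mulf_eq0 (negbTE lam0) /= => /eqP q20; apply: qx; rewrite q10 q20.
by rewrite mulrCA [p2 * _]mulrCA -mulrDr.
Qed.

End Paths.

Section GL2Action.
Variable R : realType.
Local Notation pt := (R * R * R * R * R)%type.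

Record mat2 := Mat2 { a11 : R; a12 : R; a21 : R; a22 : R }.

Implicit Types (g h : mat2) (p : pt).

Definition det2 (g : mat2) := a11 g * a22 g - a12 g * a21 g.
Definition tr2 (g : mat2) := a11 g + a22 g.
Definition mul2 (g h : mat2) :=
  Mat2 (a11 g * a11 h + a12 g * a21 h) (a11 g * a12 h + a12 g * a22 h)
       (a21 g * a11 h + a22 g * a21 h) (a21 g * a12 h + a22 g * a22 h).
Definition adj2 (g : mat2) := Mat2 (a22 g) (- a12 g) (- a21 g) (a11 g).
Definition scale2 (s : R) (g : mat2) := Mat2 (s * a11 g) (s * a12 g) (s * a21 g) (s * a22 g).

(* [g] acts by [x |-> g x] and by substitution [y |-> y o g^T]. *)
Definition act (g : mat2) (p : pt) : pt :=
  let: (x1, x2, y1, y2, y3) := p in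
  (a11 g * x1 + a12 g * x2, a21 g * x1 + a22 g * x2,
   qform y1 y2 y3 (a11 g) (a12 g),
   2 * y1 * a11 g * a21 g + y2 * (a11 g * a22 g + a12 g * a21 g) + 2 * y3 * a12 g * a22 g,
   qform y1 y2 y3 (a21 g) (a22 g)).

Lemma det2_mul g h : det2 (mul2 g h) = det2 g * det2 h.
Proof. by rewrite /det2 /=; ring. Qed.

Lemma det2_adj g : det2 (adj2 g) = det2 g.
Proof. by rewrite /det2 /=; ring. Qed.

Lemma det2_scale s g : det2 (scale2 s g) = s ^+ 2 * det2 g.
Proof. by rewrite /det2 /=; ring. Qed.

Lemma tr2_scale s g : tr2 (scale2 s g) = s * tr2 g.
Proof. by rewrite /tr2 /=; ring. Qed.

Lemma act_mul g h p : act (mul2 g h) p = act g (act h p).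
Proof.
by case: p => [[[[x1 x2] y1] y2] y3]; rewrite /act /qform /=; congr (_, _, _, _, _); ring.
Qed.

Lemma act_adj g p : act (adj2 g) (act g p) = scale_pt (det2 g) (det2 g ^+ 2) p.
Proof.
by case: p => [[[[x1 x2] y1] y2] y3]; rewrite /act /qform /det2 /=; congr (_, _, _, _, _); ring.
Qed.

Lemma act_scale2 s g p : act (scale2 s g) p = scale_pt s (s ^+ 2) (act g p).
Proof.
by case: p => [[[[x1 x2] y1] y2] y3]; rewrite /act /qform /=; congr (_, _, _, _, _); ring.
Qed.

Lemma act_scale_pt g lam mu p : act g (scale_pt lam mu p) = scale_pt lam mu (act g p).
Proof.
by case: p => [[[[x1 x2] y1] y2] y3]; rewrite /act /qform /=; congr (_, _, _, _, _); ring.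
Qed.

Lemma scale_ptA a b c d p : scale_pt a b (scale_pt c d p) = scale_pt (a * c) (b * d) p.
Proof. by case: p => [[[[x1 x2] y1] y2] y3]; rewrite /=; congr (_, _, _, _, _); ring. Qed.

Lemma scale_pt1 p : scale_pt 1 1 p = p.
Proof. by case: p => [[[[x1 x2] y1] y2] y3]; rewrite /= !mul1r. Qed.

Lemma continuous_act (g : R -> mat2) p :
  continuous (fun t => a11 (g t)) -> continuous (fun t => a12 (g t)) ->
  continuous (fun t => a21 (g t)) -> continuous (fun t => a22 (g t)) ->
  [/\ continuous (fun t => (act (g t) p).1.1.1.1),
      continuous (fun t => (act (g t) p).1.1.1.2),
      continuous (fun t => (act (g t) p).1.1.2),
      continuous (fun t => (act (g t) p).1.2) &
      continuous (fun t => (act (g t) p).2)].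
Proof.
by case: p => [[[[x1 x2] y1] y2] y3] *; rewrite /act /qform /=; split; solve_continuous.
Qed.

End GL2Action.

Section MplusConnected.
Variable R : realType.
Local Notation pt := (R * R * R * R * R)%type.

Lemma in5_Mplus_act (g : mat2 R) (p : pt) :
  det2 g != 0 -> in5 (@inMplus R) p -> in5 (@inMplus R) (act g p).
Proof.
case: p => [[[[x1 x2] y1] y2] y3] g0 /= [_ [hD hR]]; apply: inMplus_intro.
  rewrite (_ : Delta _ _ _ = det2 g ^+ 2 * Delta y1 y2 y3); last first.
    by rewrite /qform /Delta /det2; ring.
  by rewrite mulr_gt0 // exprn_even_gt0.
rewrite (_ : Res _ _ _ _ _ = det2 g ^+ 2 * Res x1 x2 y1 y2 y3); last first.
  by rewrite /qform /Res /det2; ring.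
by rewrite mulf_neq0 // expf_neq0.
Qed.

Definition segment_from_id (h : mat2 R) (t : R) : mat2 R :=
  Mat2 (lerp 1 (a11 h) t) (lerp 0 (a12 h) t) (lerp 0 (a21 h) t) (lerp 1 (a22 h) t).

Lemma det2_segment_from_id_gt0 (h : mat2 R) (t : R) :
  0 < det2 h -> 0 <= tr2 h -> 0 <= t <= 1 -> 0 < det2 (segment_from_id h t).
Proof.
rewrite /det2 /tr2 /segment_from_id /lerp /= => hdet htr /andP[t0 t1].
have -> : ((1 - t) * 1 + t * a11 h) * ((1 - t) * 1 + t * a22 h) -
    ((1 - t) * 0 + t * a12 h) * ((1 - t) * 0 + t * a21 h) =
    (1 - t) ^+ 2 + (1 - t) * t * (a11 h + a22 h) + t ^+ 2 * (a11 h * a22 h - a12 h * a21 h).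
  by ring.
have [->|t_neq1] := eqVneq t 1; first by rewrite subrr expr0n /= !mul0r !add0r expr1n mul1r.
have : 0 < (1 - t) ^+ 2 by rewrite exprn_even_gt0 //= subr_eq0 eq_sym.
have : 0 <= (1 - t) * t * (a11 h + a22 h) by rewrite !mulr_ge0 // subr_ge0.
have : 0 <= t ^+ 2 * (a11 h * a22 h - a12 h * a21 h) by rewrite mulr_ge0 ?sqr_ge0 // ltW.
lra.
Qed.

Lemma path_Mplus_act (h : mat2 R) (p q : pt) (lam mu : R) :
  in5 (@inMplus R) p -> 0 < det2 h -> 0 <= tr2 h -> lam != 0 -> mu != 0 ->
  act h p = scale_pt lam mu q -> path_in (@inMplus R) p q.
Proof.
move=> pM hdet htr lam0 mu0 hpq.
have [c1 c2 c3 c4 c5] := @continuous_act _ (segment_from_id h) p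
  (@continuous_lerp _ 1 (a11 h)) (@continuous_lerp _ 0 (a12 h))
  (@continuous_lerp _ 0 (a21 h)) (@continuous_lerp _ 1 (a22 h)).
apply: (@path_in_intro _ _ _ _ (fun t => act (segment_from_id h t) p) lam mu) => //.
- by case: p {pM hpq c1 c2 c3 c4 c5} => [[[[x1 x2] y1] y2] y3];
    rewrite /act /qform /segment_from_id /lerp /=; congr (_, _, _, _, _); ring.
- rewrite -hpq; congr act; case: h {hdet htr hpq c1 c2 c3 c4 c5} => ? ? ? ?.
  by rewrite /segment_from_id /lerp /=; congr Mat2; ring.
move=> t t01; apply: in5_Mplus_act => //.
by rewrite gt_eqF // det2_segment_from_id_gt0.
Qed.

(* The point [x = u1 + u2, y = u1 u2] of M_+. *)
Definition base_pt : pt := (1, 1, 0, 1, 0).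

Lemma Mplus_normal_form (p : pt) : in5 (@inMplus R) p ->
  exists2 g : mat2 R, 0 < det2 g &
    exists a b : R, [/\ a != 0, b != 0 & act g p = scale_pt a b base_pt].
Proof.
case: p => [[[[x1 x2] y1] y2] y3] [_ [hD hR]].
have [m1 [m2 [n1 [n2 [e1 e2 e3]]]]] := Delta_gt0_split hD.
move: hD hR; rewrite {}e1 {}e2 {}e3 Delta_mul Res_mul => hD.
rewrite mulf_eq0 negb_or => /andP[].
have {hD} d0 : m1 * n2 - m2 * n1 != 0 by rewrite -sqrf_eq0 gt_eqF.
wlog neg : m1 m2 n1 n2 d0 /
    (x2 * m1 - x1 * m2) * (x2 * n1 - x1 * n2) * (m1 * n2 - m2 * n1) < 0.
  move=> wlog a0 b0; have := mulf_neq0 (mulf_neq0 a0 b0) d0.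
  case: ltgtP => // [lt0 _|gt0 _]; first exact: wlog.
  have [||g gpos [a [b [a0' b0' gE]]]] := wlog n1 n2 m1 m2 _ _ b0 a0.
  - by rewrite -oppr_eq0 opprB [n2 * _]mulrC [n1 * _]mulrC.
  - have -> : (x2 * n1 - x1 * n2) * (x2 * m1 - x1 * m2) * (n1 * m2 - n2 * m1) =
        - ((x2 * m1 - x1 * m2) * (x2 * n1 - x1 * n2) * (m1 * n2 - m2 * n1)) by ring.
    by rewrite oppr_lt0.
  exists g => //; exists a, b; split => //; rewrite -gE.
  by congr act; congr (_, _, _, _, _); ring.
move=> a0 b0; set a := x2 * m1 - x1 * m2; set b := x2 * n1 - x1 * n2.
set d := m1 * n2 - m2 * n1.
(* The rows of [g] are zeros of n and of m, so that y o g^T is a multiple of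
   u1 u2, scaled so that g x is a multiple of u1 + u2. *)
exists (Mat2 (- a * n2) (a * n1) (- b * m2) (b * m1)).
  by rewrite (_ : det2 _ = - (a * b * d)) ?oppr_gt0 // /det2 /a /b /d /=; ring.
exists (a * b), (- (a * b) * d ^+ 2); split.
- exact: mulf_neq0.
- by rewrite mulf_neq0 ?oppr_eq0 ?mulf_neq0 ?expf_neq0.
by rewrite /act /scale_pt /base_pt /qform /a /b /d /=; congr (_, _, _, _, _); ring.
Qed.

Lemma act_adj2_base_pt (g : mat2 R) (q : pt) (a b : R) :
  det2 g != 0 -> a != 0 -> b != 0 -> act g q = scale_pt a b base_pt ->
  act (adj2 g) base_pt = scale_pt (det2 g / a) (det2 g ^+ 2 / b) q.
Proof.
move=> g0 a0 b0 gq; have := act_adj g q.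
rewrite gq act_scale_pt => /(congr1 (scale_pt a^-1 b^-1)).
by rewrite !scale_ptA !mulVf // scale_pt1 => ->; rewrite [_^-1 * _]mulrC [b^-1 * _]mulrC.
Qed.

Lemma path_Mplus (p q : pt) :
  in5 (@inMplus R) p -> in5 (@inMplus R) q -> path_in (@inMplus R) p q.
Proof.
move=> pM qM.
have [gp gp_pos [ap [bp [ap0 bp0 gpE]]]] := Mplus_normal_form pM.
have [gq gq_pos [aq [bq [aq0 bq0 gqE]]]] := Mplus_normal_form qM.
have gq0 : det2 gq != 0 by rewrite gt_eqF.
set h := mul2 (adj2 gq) gp.
have [s s2 s_tr] := exists_sign_mul_ge0 (tr2 h); have s0 := sign_neq0 s2.
apply: (path_Mplus_act (h := scale2 s h) (lam := s * ap * (det2 gq / aq))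
  (mu := s ^+ 2 * bp * (det2 gq ^+ 2 / bq)) pM).
- by rewrite det2_scale s2 mul1r det2_mul det2_adj mulr_gt0.
- by rewrite tr2_scale.
- by rewrite !mulf_neq0 ?invr_eq0.
- by rewrite !mulf_neq0 ?expf_neq0 ?invr_eq0.
by rewrite act_scale2 act_mul gpE act_scale_pt (act_adj2_base_pt gq0 aq0 bq0 gqE) !scale_ptA.
Qed.

End MplusConnected.

Section Components.
Variable R : realType.
Local Notation pt := (R * R * R * R * R)%type.

Lemma no_path_Mplus_Mminus (p q : pt) :
  in5 (@inMplus R) p -> in5 (@inMminus R) q -> ~ path_in (@inU R) p q.
Proof.
case: p q => [[[[p1 p2] p3] p4] p5] [[[[q1 q2] q3] q4] q5] [_ [pD _]] [_ [qD _]].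
case=> g1 [g2 [g3 [g4 [g5 [lam [mu [[_ _ c3 c4 c5] [_ [mu0 [[_ _ g30 g40 g50]
  [[_ _ g31 g41 g51] gU]]]]]]]]]]].
pose f t := Delta (g3 t) (g4 t) (g5 t).
have cf : continuous f by rewrite /f /Delta; solve_continuous.
have f0 : 0 < f 0 by rewrite /f g30 g40 g50.
have f1 : f 1 < 0.
  by rewrite /f g31 g41 g51 Delta_scale pmulr_rlt0 // exprn_even_gt0.
have [c c01 fc] : exists2 c, c \in `[0, 1] & f c = 0.
  apply: IVT; [exact: ler01 | exact: continuous_subspaceT |].
  by rewrite ge_min le_max (ltW f1) (ltW f0) orbT.
move: c01; rewrite in_itv /= => /gU [rep [notS1 _]].
by apply: notS1; split.
Qed.

Lemma two_components_Mplus_Mminus : two_components (@inU R) (@inMplus R) (@inMminus R).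
Proof.
split.
  case=> [[[[x1 x2] y1] y2] y3]; split.
    case=> x0 [notS1 notS2].
    have hD : Delta y1 y2 y3 != 0 by apply/eqP => hD; apply: notS1.
    have hR : Res x1 x2 y1 y2 y3 != 0 by apply/eqP => hR; apply: notS2.
    by case: (ltgtP (Delta y1 y2 y3) 0) hD => // hD _; [right | left]; split => //; split.
  case=> -[x0 [hD hR]]; split => //; split => -[_ h0];
    by [move: hD; rewrite h0 ltxx | move: hR; rewrite h0 eqxx].
split.
  case=> [[[[x1 x2] y1] y2] y3] [[_ [hD _]] [_ [hD' _]]].
  by move: (lt_trans hD' hD); rewrite ltxx.
split.
  exists (1, 1, 0, 1, 0); apply: inMplus_intro.
    by rewrite /Delta expr1n !mulr0 subr0 ltr01.
  by rewrite /Res mulr0 mul0r !mul1r add0r sub0r oppr_eq0 oner_eq0.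
split.
  exists (1, 0, 1, 0, 1); apply: inMminus_intro.
    by rewrite /Delta expr0n /= !mulr1 sub0r oppr_lt0 ltr0n.
  by case=> /eqP; rewrite oner_eq0.
split; first exact: path_Mplus.
split; first exact: path_Mminus.
exact: no_path_Mplus_Mminus.
Qed.

End Components.

Theorem theorem3p12 (R : realType) :
  two_components (@inU R) (@inMplus R) (@inMminus R) /\
  (forall x1 x2 y1 y2 y3 : R,
    (inMplus x1 x2 y1 y2 y3 -> lie_iso (gxy x1 x2 y1 y2 y3) (@so3_so3 R)) /\
    (inMminus x1 x2 y1 y2 y3 -> lie_iso (gxy x1 x2 y1 y2 y3) (@so3C R)) /\
    (inS1 x1 x2 y1 y2 y3 -> ~ inC x1 x2 y1 y2 y3 ->
       lie_iso (gxy x1 x2 y1 y2 y3) (@so3_ltimes_R3 R)) /\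
    (inS2 x1 x2 y1 y2 y3 -> ~ inC x1 x2 y1 y2 y3 ->
       lie_iso (gxy x1 x2 y1 y2 y3) (@so3_oplus_R3 R)) /\
    (inC x1 x2 y1 y2 y3 -> lie_iso (gxy x1 x2 y1 y2 y3) (@nil_alg R))).
Proof.
split; first exact: two_components_Mplus_Mminus.
move=> x1 x2 y1 y2 y3; split; first exact: lie_iso_gxy_of_Mplus.
split; first exact: lie_iso_gxy_of_Mminus.
split; first exact: lie_iso_gxy_of_S1.
by split; [exact: lie_iso_gxy_of_S2 | exact: lie_iso_gxy_of_C].
Qed.
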